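(* Let $M\in\mathbb{R}^{N\times N}$ be symmetric positive definite, and write $|v|_M^2=v^\intercal M v$. Let $f:\mathbb{R}^N\to\mathbb{R}^N$ satisfy: there is $L_f>0$ with $|f(x)-f(y)|_M\le L_f|x-y|_M$ for all $x,y\in K$, where $K\subset\mathbb{R}^N$ is the domain of the states. Fix a parameter $\mu$ and a final time $\tau>0$, and let $x(\cdot)=x(\cdot,\mu)$ solve the autonomous full-order model $\dot x(t)=f(x(t))$ on $[0,\tau]$. Let $U_\mu\in\mathbb{R}^{N\times n}$ be a local $M$-orthonormal basis, i.e. $U_\mu^\intercal M U_\mu=I$, with $M$-adjoint $U_\mu^*=U_\mu^\intercal M$, and let $\hat x(\cdot)=\hat x(\cdot,\mu)\in\mathbb{R}^n$ solve the Galerkin reduced-order model $\dot{\hat x}(t)=U_\mu^* f(U_\mu\hat x(t))$, $\hat x(0)=U_\mu^*x(0)$. Let $P_{U_\mu}^\perp=I-U_\mu U_\mu^*$. Then there is a constant $C(\tau)>0$ (depending only on $\tau$ and $L_f$) such that $$\|x(\mu)-U_\mu\hat x(\mu)\|_M\le\big(1+L_f\,C(\tau)\sqrt{\tau}\big)\,\|P_{U_\mu}^\perp x(\mu)\|_M,$$ where for a trajectory $z:[0,\tau]\to\mathbb{R}^N$, $\|z\|_M^2=\int_0^\tau |z(t)|_M^2\,dt$.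
   Context: $K$ is understood as a set of states containing all states at which $f$ is evaluated (the full-order trajectory, its $M$-orthogonal projection $U_\mu U_\mu^* x(t)$, and the reduced reconstruction $U_\mu \hat x(t)$). $P_{U_\mu}=U_\mu U_\mu^*$ is the $M$-orthogonal projection onto the column space of $U_\mu$. *)

From HB Require Import structures.
From mathcomp Require Import all_boot all_order all_algebra.
From mathcomp Require Import all_classical all_reals all_analysis.
Set Implicit Arguments. Unset Strict Implicit. Unset Printing Implicit Defensive.
Import Order.TTheory GRing.Theory Num.Theory.
Import numFieldNormedType.Exports.
Local Open Scope classical_set_scope.
Local Open Scope ring_scope.

Definition sqnormM {R : realType} {N : nat} (M : 'M[R]_N) (v : 'cV[R]_N) : R :=
  (v^T *m M *m v) 0 0.

Definition normM {R : realType} {N : nat} (M : 'M[R]_N) (v : 'cV[R]_N) : R :=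
  Num.sqrt (sqnormM M v).

Definition spd {R : realType} {N : nat} (M : 'M[R]_N) : Prop :=
  M^T = M /\ forall v : 'cV[R]_N, v != 0 -> 0 < sqnormM M v.

Definition Madj {R : realType} {N n : nat} (M : 'M[R]_N) (U : 'M[R]_(N, n))
  : 'M[R]_(n, N) := U^T *m M.

Definition trajnormM {R : realType} {N : nat} (M : 'M[R]_N) (tau : R)
  (z : R -> 'cV[R]_N) : R :=
  Num.sqrt (Rintegral lebesgue_measure `[0, tau] (fun t => sqnormM M (z t))).

(* Write the error as x - U xh = P^perp x + U theta with theta := U^* x - xh,
   so that |x - U xh|_M^2 <= 2 |P^perp x|_M^2 + 2 |theta|^2.  The coefficient
   error solves theta' = U^* (f(x) - f(U xh)), theta(0) = 0; by Young's and
   Bessel's inequalities and the Lipschitz bound on K, g := |theta|^2 satisfies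
   g' <= 3 Lf g + 2 Lf |P^perp x|_M^2.  Gronwall's lemma then bounds g on
   [0, tau] by 2 Lf e^(3 Lf tau) ||P^perp x||_M^2, and integrating the first
   inequality gives
   ||x - U xh||_M^2 <= (2 + 4 Lf tau e^(3 Lf tau)) ||P^perp x||_M^2. *)

From HB Require Import structures.
From mathcomp Require Import all_boot all_order all_algebra.
From mathcomp Require Import all_classical all_reals all_analysis.
From mathcomp Require Import ring lra.
Import Order.TTheory GRing.Theory Num.Theory.
Import numFieldNormedType.Exports.
Local Open Scope classical_set_scope.
Local Open Scope ring_scope.

Section matrix_calculus.
Context {R : realType}.

Lemma cvg_mxP {T : Type} {F : set_system T} {FF : Filter F} {m n : nat}
    (z : T -> 'M[R]_(m, n)) (l : 'M[R]_(m, n)) :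
  z @ F --> l <-> forall i j, (fun t => z t i j) @ F --> l i j.
Proof.
split=> [zl i j | zl].
  exact: cvg_comp zl (@coord_continuous R m n i j l).
apply/cvgrPdist_le => e e0; near=> t.
rewrite [leLHS]/Num.Def.normr /= mx_normrE (bigmax_le _ (ltW e0)) //= => ij _.
rewrite !mxE; move: ij; near: t; apply: filter_forall => -[i j] /=.
exact: (cvgrPdist_le _ _).1 (zl i j) e e0.
Unshelve. all: by end_near. Qed.

Lemma continuous_mulmx {T : topologicalType} {t : T} {m n p : nat}
    {z : T -> 'M[R]_(m, n)} {w : T -> 'M[R]_(n, p)} :
  {for t, continuous z} -> {for t, continuous w} ->
  {for t, continuous (fun s => z s *m w s)}.
Proof.
move=> zc wc; apply/cvg_mxP => i j; rewrite mxE.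
under eq_cvg do rewrite mxE.
apply: cvg_big => [|k _]; first exact: add_continuous.
exact: cvgM ((cvg_mxP _ _).1 zc i k) ((cvg_mxP _ _).1 wc k j).
Qed.

Lemma continuous_trmx {T : topologicalType} {t : T} {m n : nat}
    {z : T -> 'M[R]_(m, n)} :
  {for t, continuous z} -> {for t, continuous (fun s => (z s)^T)}.
Proof.
move=> zc; apply/cvg_mxP => i j; rewrite mxE.
under eq_cvg do rewrite mxE.
exact: (cvg_mxP _ _).1 zc j i.
Qed.

Lemma continuous_lmulmx {T : topologicalType} {m n p : nat}
    (A : 'M[R]_(m, n)) {z : T -> 'M[R]_(n, p)} :
  continuous z -> continuous (fun s => A *m z s).
Proof.
by move=> zc t; exact: continuous_mulmx (@cst_continuous _ _ A t) (zc t).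
Qed.

Context {V : normedModType R}.

Lemma is_derive_mxP {m n : nat} {z : V -> 'M[R]_(m, n)} {t v : V} {dz} :
  is_derive t v z dz <-> forall i j, is_derive t v (fun s => z s i j) (dz i j).
Proof.
split=> [[zd <-] i j | dzij].
  apply: DeriveDef; first by move/derivable_mxP: zd; apply.
  by rewrite derive_mx // mxE.
have zd : derivable z t v.
  by apply/derivable_mxP => i j; case: (dzij i j).
apply: DeriveDef => //; apply/matrixP => i j.
by rewrite derive_mx // mxE; case: (dzij i j).
Qed.

Lemma is_derive_mulmx {m n p : nat} {z : V -> 'M[R]_(m, n)}
    {w : V -> 'M[R]_(n, p)} {t v : V} {dz dw} :
  is_derive t v z dz -> is_derive t v w dw ->
  is_derive t v (fun s => z s *m w s) (dz *m w t + z t *m dw).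
Proof.
move=> /is_derive_mxP zd /is_derive_mxP wd; apply/is_derive_mxP => i j.
have -> : (fun s => (z s *m w s) i j) =
    \sum_(k < n) ((fun s => z s i k) * (fun s => w s k j)).
  by apply/funext => s; rewrite mxE fct_sumE.
have -> : (dz *m w t + z t *m dw) i j =
    \sum_(k < n) (z t i k *: dw k j + w t k j *: dz i k).
  rewrite !mxE -big_split /=; apply: eq_bigr => k _.
  by rewrite /GRing.scale /= addrC [dz i k * _]mulrC.
by apply: is_derive_sum => k; exact: is_deriveM.
Qed.

Lemma is_derive_trmx {m n : nat} {z : V -> 'M[R]_(m, n)} {t v : V} {dz} :
  is_derive t v z dz -> is_derive t v (fun s => (z s)^T) dz^T.
Proof.
move=> /is_derive_mxP zd; apply/is_derive_mxP => i j; rewrite mxE.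
by under eq_fun do rewrite mxE; exact: zd.
Qed.

End matrix_calculus.

Definition dotM {R : realType} {N : nat} (M : 'M[R]_N) (a b : 'cV[R]_N) : R :=
  (a^T *m M *m b) 0 0.

Section M_inner_product.
Context {R : realType} {N : nat} {M : 'M[R]_N}.
Hypothesis M_sym : M^T = M.

Lemma dotMC a b : dotM M a b = dotM M b a.
Proof.
rewrite /dotM; have -> : b^T *m M *m a = (a^T *m M *m b)^T.
  by rewrite !trmx_mul trmxK M_sym mulmxA.
by rewrite [RHS]mxE.
Qed.

Lemma sqnormMD a b :
  sqnormM M (a + b) = sqnormM M a + sqnormM M b + 2 * dotM M a b.
Proof.
rewrite /sqnormM [(a + b)^T]linearD /= !mulmxDl !mulmxDr.
rewrite ![(_ + _ : 'M[R]_1) 0 0]mxE.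
have := dotMC b a; rewrite /dotM => ->; ring.
Qed.

Lemma sqnormMZ c a : sqnormM M (c *: a) = c ^+ 2 * sqnormM M a.
Proof.
rewrite /sqnormM linearZ /= [(c *: a)^T]linearZ /= -!scalemxAl.
by rewrite scalerA mxE expr2.
Qed.

Lemma dotMZl c a b : dotM M (c *: a) b = c * dotM M a b.
Proof. by rewrite /dotM [(c *: a)^T]linearZ /= -!scalemxAl mxE. Qed.

Lemma sqnormMB a b :
  sqnormM M (a - b) = sqnormM M a + sqnormM M b - 2 * dotM M a b.
Proof.
rewrite -scaleN1r sqnormMD sqnormMZ (dotMC a) dotMZl (dotMC b).
by rewrite sqrrN expr1n mul1r mulN1r mulrN.
Qed.

Hypothesis M_psd : forall v, 0 <= sqnormM M v.

Lemma dotM_young (c : R) a b : 0 < c ->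
  2 * dotM M a b <= c * sqnormM M a + sqnormM M b / c.
Proof.
move=> c0; have := M_psd (c *: a - b).
rewrite sqnormMB sqnormMZ dotMZl => h.
rewrite -(ler_pM2l c0) mulrDr [c * (_ / c)]mulrC divfK ?gt_eqF //.
nra.
Qed.

Lemma sqnormMD_le a b :
  sqnormM M (a + b) <= 2 * sqnormM M a + 2 * sqnormM M b.
Proof.
rewrite sqnormMD; have := dotM_young 1 a b ltr01.
by rewrite mul1r divr1; lra.
Qed.

Lemma normM_le_sqr (L : R) u v : 0 <= L ->
  normM M u <= L * normM M v -> sqnormM M u <= L ^+ 2 * sqnormM M v.
Proof.
move=> L0; rewrite /normM -{1}(ger0_norm L0) -sqrtr_sqr -sqrtrM ?sqr_ge0 //.
by rewrite ler_sqrt // mulr_ge0 ?sqr_ge0.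
Qed.

End M_inner_product.

Lemma sqnormM1_ge0 {R : realType} {n : nat} (v : 'cV[R]_n) :
  0 <= sqnormM 1%:M v.
Proof.
rewrite /sqnormM mulmx1 mxE; apply: sumr_ge0 => j _.
by rewrite mxE -expr2 sqr_ge0.
Qed.

Lemma spd_sqnormM_ge0 {R : realType} {N : nat} {M : 'M[R]_N} :
  spd M -> forall v, 0 <= sqnormM M v.
Proof.
move=> [_ M_pos] v; have [->|v0] := eqVneq v 0; last exact/ltW/M_pos.
by rewrite /sqnormM mulmx0 mxE.
Qed.

Section M_orthonormal_basis.
Context {R : realType} {N n : nat} {M : 'M[R]_N} {U : 'M[R]_(N, n)}.
Hypothesis M_sym : M^T = M.

Lemma dotM_Madj w c : dotM M w (U *m c) = dotM 1%:M (Madj M U *m w) c.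
Proof. by rewrite /dotM /Madj mulmx1 !trmx_mul trmxK M_sym !mulmxA. Qed.

Hypothesis U_orthonormal : U^T *m M *m U = 1%:M.

Lemma sqnormM_mulU c : sqnormM M (U *m c) = sqnormM 1%:M c.
Proof.
rewrite /sqnormM trmx_mul.
have -> : c^T *m U^T *m M *m (U *m c) = c^T *m (U^T *m M *m U) *m c.
  by rewrite !mulmxA.
by rewrite U_orthonormal.
Qed.

Hypothesis M_psd : forall v, 0 <= sqnormM M v.

Lemma sqnormM_Madj_le w : sqnormM 1%:M (Madj M U *m w) <= sqnormM M w.
Proof.
set c := Madj M U *m w; have := M_psd (w - U *m c).
rewrite sqnormMB // sqnormM_mulU dotM_Madj -/c.
by rewrite -[dotM 1%:M c c]/(sqnormM 1%:M c); lra.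
Qed.

End M_orthonormal_basis.

Section quadratic_form_calculus.
Context {R : realType} {N : nat} (A : 'M[R]_N).

Lemma continuous_sqnormM {T : topologicalType} {t : T} {z : T -> 'cV[R]_N} :
  {for t, continuous z} -> {for t, continuous (fun s => sqnormM A (z s))}.
Proof.
move=> zc; have Azc := continuous_trmx zc.
have := continuous_mulmx (continuous_mulmx Azc (@cst_continuous _ _ A t)) zc.
by move/(cvg_mxP _ _).1/(_ 0 0).
Qed.

Lemma is_derive_sqnormM {z : R -> 'cV[R]_N} {t : R} {dz} : A^T = A ->
  is_derive t 1 z dz ->
  is_derive t 1 (fun s => sqnormM A (z s)) (2 * dotM A (z t) dz).
Proof.
move=> A_sym zd.
have zAd := is_derive_mulmx (is_derive_trmx zd) (is_derive_cst A t 1).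
have := is_derive_mulmx zAd zd.
move/is_derive_mxP/(_ 0 0); rewrite mulmx0 addr0 mxE.
rewrite -/(dotM A dz (z t)) -/(dotM A (z t) dz) (dotMC A_sym).
by rewrite mulr2n mulrDl mul1r.
Qed.

End quadratic_form_calculus.

Section real_integrals.
Context {R : realType}.
Local Notation mu := (@lebesgue_measure R).

Lemma continuous_itv_integrable {a b : R} {h : R -> R} :
  {within `[a, b], continuous h} -> mu.-integrable `[a, b] (EFin \o h).
Proof. exact: continuous_compact_integrable (@segment_compact _ a b). Qed.

Lemma lebesgue_measure_itv_cc {a b : R} : a <= b ->
  lebesgue_measure ([set` `[a, b]] : set R) = (b - a)%:E.
Proof.
move=> ab; rewrite lebesgue_measure_itv /= lte_fin; case: ltP => [_|ba].
  by rewrite -EFinD.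
have -> : b = a by apply/eqP; rewrite eq_le ba ab.
by rewrite subrr.
Qed.

Lemma is_derive_Rintegral_itv {q : R -> R} {t1 s : R} :
  {within `[0, t1], continuous q} -> s \in `]0, t1[ ->
  is_derive s 1 (fun u => \int[mu]_(v in `[0, u]) q v) (q s).
Proof.
move=> qc sI; move: (sI); rewrite in_itv /= => /andP[s0 st1].
have q_int : mu.-integrable `[0, t1] (EFin \o q).
  exact: continuous_itv_integrable qc.
have [qci _ _] := (continuous_within_itvP q (lt_trans s0 st1)).1 qc.
have [Fd F'] := continuous_FTC1_closed st1 q_int s0 (qci s sI).
by apply: DeriveDef => //; rewrite -derive1E.
Qed.

Lemma ge0_le_Rintegral_itv (q : R -> R) (t t1 : R) :
  (forall s, 0 <= q s) -> mu.-integrable `[0, t1] (EFin \o q) ->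
  0 <= t -> t <= t1 ->
  \int[mu]_(s in `[0, t]) q s <= \int[mu]_(s in `[0, t1]) q s.
Proof.
move=> q0 q_int t0 tt1; rewrite -subr_ge0.
rewrite (@Rintegral_itvB _ _ (BLeft 0) (BRight t1) t) ?bnd_simp //.
exact: Rintegral_ge0.
Qed.

Lemma le_Rintegral_affine (a b c B : R) (E q : R -> R) : a <= b ->
  {within `[a, b], continuous E} -> {within `[a, b], continuous q} ->
  (forall t, a <= t <= b -> E t <= c * q t + B) ->
  \int[mu]_(t in `[a, b]) E t <= c * \int[mu]_(t in `[a, b]) q t + B * (b - a).
Proof.
move=> ab Ec qc EqB.
have ab_mes : measurable [set` `[a, b]] by exact: measurable_itv.
have cq : {within `[a, b], continuous (fun t => c * q t)}.
  have -> : (fun t => c * q t) = cst c * q by [].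
  by move=> t; apply: continuousM; [exact: cst_continuous | exact: qc].
have cB : {within `[a, b], continuous (fun=> B)}.
  by move=> t; exact: cst_continuous.
have cqB : {within `[a, b], continuous (fun t => c * q t + B)}.
  have -> : (fun t => c * q t + B) = (fun t => c * q t) + cst B by [].
  by move=> t; apply: continuousD; [exact: cq | exact: cB].
have -> : c * \int[mu]_(t in `[a, b]) q t + B * (b - a) =
    \int[mu]_(t in `[a, b]) (c * q t + B).
  have q_int := continuous_itv_integrable qc.
  have cq_int := continuous_itv_integrable cq.
  have cB_int := continuous_itv_integrable cB.
  rewrite RintegralD // RintegralZl // Rintegral_cst //.
  rewrite (_ : fine _ = b - a) //.
  exact: (congr1 fine (lebesgue_measure_itv_cc ab)).
by apply: le_Rintegral => //; exact: continuous_itv_integrable.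
Qed.

Lemma gronwall (a t1 : R) (g q : R -> R) :
  0 <= a -> (forall s, 0 <= q s) ->
  {within `[0, t1], continuous g} -> {within `[0, t1], continuous q} ->
  (forall s, s \in `]0, t1[ -> derivable g s 1) ->
  (forall s, s \in `]0, t1[ -> 'D_1 g s <= a * g s + q s) ->
  forall t, 0 <= t -> t <= t1 ->
  g t <= expR (a * t) * (g 0 + \int[mu]_(s in `[0, t]) q s).
Proof.
move=> a0 q0 gc qc gd g'le t t0 tt1.
pose F s := \int[mu]_(u in `[0, s]) q u.
pose e s := expR (- a * s).
(* [h] is nonincreasing: [h' = e (g' - a g) - q <= (e - 1) q <= 0]. *)
pose h := e * g - F.
have q_int := continuous_itv_integrable qc.
have e_der (s : R) : is_derive s 1 e (expR (- a * s) * (- a *: 1)).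
  exact: is_derive1_comp (is_derive_expR _)
    (is_deriveZ (- a) (is_derive_id s 1)).
have h_der s (sI : s \in `]0, t1[) :
    is_derive s 1 h
      (e s *: 'D_1 g s + g s *: (expR (- a * s) * (- a *: 1)) - q s).
  apply: is_deriveB (is_derive_Rintegral_itv qc sI).
  exact: is_deriveM (e_der s) (derivableP (gd s sI)).
have h_nincr s : s \in `]0, t1[ -> 'D_1 h s <= 0.
  move=> sI; move: (sI); rewrite in_itv /= => /andP[s0 _].
  have eE1 : expR (- a * s) <= 1.
    by rewrite expR_le1 mulNr oppr_le0 mulr_ge0 // ltW.
  have [_ ->] := h_der s sI; rewrite /e /GRing.scale /= mulr1.
  have := g'le s sI; have := q0 s; have := expR_ge0 (- a * s); nra.
have e_cont : continuous e.
  move=> s; apply/differentiable_continuous/derivable1_diffP.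
  by case: (e_der s).
have F_cont := parameterized_integral_continuous (le_trans t0 tt1) q_int.
have h_cont : {within `[0, t1], continuous h}.
  move=> s; apply: continuousB; last exact: F_cont.
  by apply: continuousM; [exact: continuous_subspaceT | exact: gc].
have h0 : h 0 = g 0.
  by rewrite /h /e /F !fctE mulr0 expR0 mul1r set_itv1 Rintegral_set1 subr0.
have ht : h t <= g 0.
  rewrite -h0; apply: (ler0_derive1_nincr _ _ h_cont) => // s sI.
  - by case: (h_der s sI).
  - by rewrite derive1E; exact: h_nincr.
have eK : expR (a * t) * e t = 1 by rewrite /e -expRD mulNr addrN expR0.
rewrite -[g t]mul1r -eK -mulrA ler_wpM2l ?expR_ge0 //.
by move: ht; rewrite /h /F !fctE; lra.
Qed.

End real_integrals.

Definition galerkin_constant {R : realType} (tau Lf : R) : R :=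
  2 + 4 * Lf * tau * expR (3 * Lf * tau).

Lemma galerkin_constant_gt0 {R : realType} (tau Lf : R) :
  0 <= tau -> 0 <= Lf -> 0 < galerkin_constant tau Lf.
Proof.
move=> tau0 Lf0; rewrite /galerkin_constant ltr_wpDr //.
by rewrite !mulr_ge0 // expR_ge0.
Qed.

Section galerkin_error.
Context {R : realType} {tau Lf : R} {N n : nat} {M : 'M[R]_N}
  {K : set 'cV[R]_N} {f : 'cV[R]_N -> 'cV[R]_N} {U : 'M[R]_(N, n)}
  {x : R -> 'cV[R]_N} {xh : R -> 'cV[R]_n}.
Hypotheses (tau_gt0 : 0 < tau) (Lf_gt0 : 0 < Lf) (M_spd : spd M).
Hypothesis f_lipschitz :
  forall y z, K y -> K z -> normM M (f y - f z) <= Lf * normM M (y - z).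
Hypothesis x_cont : {within `[0, tau], continuous x}.
Hypothesis x_der : forall t, t \in `]0, tau[ -> is_derive t 1 x (f (x t)).
Hypothesis U_orthonormal : U^T *m M *m U = 1%:M.
Hypothesis xh0 : xh 0 = Madj M U *m x 0.
Hypothesis xh_cont : {within `[0, tau], continuous xh}.
Hypothesis xh_der :
  forall t, t \in `]0, tau[ -> is_derive t 1 xh (Madj M U *m f (U *m xh t)).
Hypothesis K_states : forall t, t \in `[0, tau] -> K (x t) /\ K (U *m xh t).

Local Notation mu := (@lebesgue_measure R).
Let M_sym : M^T = M := M_spd.1.
Let M_psd := spd_sqnormM_ge0 M_spd.

Let xperp t := (1%:M - U *m Madj M U) *m x t.
Let coef_err t := Madj M U *m x t - xh t.
Let sqperp t := sqnormM M (xperp t).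
Let sqcoef t := sqnormM 1%:M (coef_err t).
Let err t := x t - U *m xh t.
Let sqerr t := sqnormM M (err t).
Let perp_energy := \int[mu]_(t in `[0, tau]) sqperp t.

Lemma err_split t : err t = xperp t + U *m coef_err t.
Proof.
rewrite /err /xperp /coef_err mulmxBl mul1mx mulmxBr !mulmxA.
by rewrite addrA subrK.
Qed.

Lemma sqerr_le t : sqerr t <= 2 * sqperp t + 2 * sqcoef t.
Proof.
rewrite /sqerr /sqperp /sqcoef err_split -(sqnormM_mulU U_orthonormal).
exact: sqnormMD_le.
Qed.

Let sqperp_cont : {within `[0, tau], continuous sqperp}.
Proof.
by move=> t; apply: continuous_sqnormM; exact: continuous_lmulmx _ x_cont t.
Qed.

Let sqcoef_cont : {within `[0, tau], continuous sqcoef}.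
Proof.
rewrite /sqcoef (_ : coef_err = (fun t => Madj M U *m x t) - xh) //.
move=> t; apply: continuous_sqnormM.
exact: continuousB (continuous_lmulmx (Madj M U) x_cont t) (xh_cont t).
Qed.

Let sqerr_cont : {within `[0, tau], continuous sqerr}.
Proof.
rewrite /sqerr (_ : err = x - (fun t => U *m xh t)) // => t.
apply: continuous_sqnormM.
exact: continuousB (x_cont t) (continuous_lmulmx U xh_cont t).
Qed.

Lemma coef_err_derive t : t \in `]0, tau[ ->
  is_derive t 1 coef_err (Madj M U *m (f (x t) - f (U *m xh t))).
Proof.
move=> tI; rewrite mulmxBr -[X in X - _]add0r -(mul0mx _ (x t)).
apply: is_deriveB (xh_der t tI).
exact: is_derive_mulmx (is_derive_cst _ t 1) (x_der t tI).
Qed.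

Let itv_ooW t : t \in `]0, tau[ -> t \in `[0, tau].
Proof. by rewrite !in_itv /= => /andP[/ltW -> /ltW ->]. Qed.

Lemma sqcoef_derive_le t : t \in `]0, tau[ ->
  derivable sqcoef t 1 /\
  'D_1 sqcoef t <= 3 * Lf * sqcoef t + 2 * Lf * sqperp t.
Proof.
move=> tI; set w := f (x t) - f (U *m xh t).
have [sqcoef_der ->] :=
  is_derive_sqnormM 1%:M (trmx1 _ _) (coef_err_derive t tI).
split => //.
have young := dotM_young (trmx1 _ _) sqnormM1_ge0 Lf
  (coef_err t) (Madj M U *m w) Lf_gt0.
have bessel := sqnormM_Madj_le M_sym U_orthonormal M_psd w.
have [Kx Kxh] := K_states t (itv_ooW t tI).
have lip := normM_le_sqr M_psd _ _ _ (ltW Lf_gt0) (f_lipschitz _ _ Kx Kxh).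
have coef_le : sqnormM 1%:M (Madj M U *m w) / Lf <= Lf * sqerr t.
  rewrite ler_pdivrMr // mulrAC -expr2.
  exact: le_trans bessel lip.
have := ler_wpM2l (ltW Lf_gt0) (sqerr_le t).
rewrite -/(sqcoef t) in young; lra.
Qed.

Lemma sqcoef_le t : 0 <= t -> t <= tau ->
  sqcoef t <= 2 * Lf * expR (3 * Lf * tau) * perp_energy.
Proof.
move=> t0 t_tau.
have sqperp2_cont : {within `[0, tau], continuous (fun s => 2 * Lf * sqperp s)}.
  rewrite (_ : (fun s => _) = cst (2 * Lf) * sqperp) // => s.
  by apply: continuousM; [exact: cst_continuous | exact: sqperp_cont].
have sqperp2_ge0 s : 0 <= 2 * Lf * sqperp s.
  by apply: mulr_ge0; [rewrite mulr_ge0 // ltW | exact: M_psd].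
have sqcoef0 : sqcoef 0 = 0.
  by rewrite /sqcoef /coef_err xh0 subrr /sqnormM mulmx0 mxE.
have a_ge0 : 0 <= 3 * Lf by rewrite mulr_ge0 // ltW.
have := gronwall (3 * Lf) tau sqcoef (fun s => 2 * Lf * sqperp s)
  a_ge0 sqperp2_ge0 sqcoef_cont sqperp2_cont
  (fun s sI => (sqcoef_derive_le s sI).1)
  (fun s sI => (sqcoef_derive_le s sI).2) t t0 t_tau.
rewrite sqcoef0 add0r => g_le; apply: (le_trans g_le).
rewrite [leRHS]mulrAC [leRHS]mulrC; apply: ler_pM.
- exact: expR_ge0.
- by apply: Rintegral_ge0 => s _.
- by rewrite ler_expR ler_wpM2l // mulr_ge0 ?ltW.
- rewrite /perp_energy -RintegralZl //.
  + apply: ge0_le_Rintegral_itv => //.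
    exact: continuous_itv_integrable sqperp2_cont.
  + exact: continuous_itv_integrable sqperp_cont.
Qed.

Lemma sqerr_integral_le :
  \int[mu]_(t in `[0, tau]) sqerr t <= galerkin_constant tau Lf * perp_energy.
Proof.
set B := 2 * Lf * expR (3 * Lf * tau) * perp_energy.
apply: le_trans (le_Rintegral_affine 0 tau 2 (2 * B) sqerr sqperp
  (ltW tau_gt0) sqerr_cont sqperp_cont _) _.
  move=> t /andP[t0 t_tau]; have := sqcoef_le t t0 t_tau.
  have := sqerr_le t; rewrite /B; lra.
by rewrite subr0 -/perp_energy /B /galerkin_constant; lra.
Qed.

Lemma galerkin_error_le :
  trajnormM M tau err <=
  Num.sqrt (galerkin_constant tau Lf) * trajnormM M tau xperp.
Proof.
rewrite /trajnormM -sqrtrM; first exact/ler_wsqrtr/sqerr_integral_le.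
exact: ltW (galerkin_constant_gt0 _ _ (ltW tau_gt0) (ltW Lf_gt0)).
Qed.

End galerkin_error.

Theorem theorem3 (R : realType) (tau Lf : R) :
  0 < tau -> 0 < Lf ->
  exists C : R, 0 < C /\
  forall (N n : nat) (M : 'M[R]_N) (K : set 'cV[R]_N)
         (f : 'cV[R]_N -> 'cV[R]_N) (U : 'M[R]_(N, n))
         (x : R -> 'cV[R]_N) (xh : R -> 'cV[R]_n),
    spd M ->
    (forall y z, K y -> K z -> normM M (f y - f z) <= Lf * normM M (y - z)) ->
    (* full-order model on [0, tau] *)
    {within `[0, tau], continuous x} ->
    (forall t, t \in `]0, tau[ -> is_derive t (1 : R) x (f (x t))) ->
    (* M-orthonormal basis *)
    U^T *m M *m U = 1%:M ->
    (* Galerkin reduced-order model *)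
    xh 0 = Madj M U *m x 0 ->
    {within `[0, tau], continuous xh} ->
    (forall t, t \in `]0, tau[ ->
       is_derive t (1 : R) xh (Madj M U *m f (U *m xh t))) ->
    (* K contains all states at which f is evaluated *)
    (forall t, t \in `[0, tau] ->
       [/\ K (x t), K (U *m (Madj M U *m x t)) & K (U *m xh t)]) ->
    trajnormM M tau (fun t => x t - U *m xh t)
      <= (1 + Lf * C * Num.sqrt tau)
         * trajnormM M tau (fun t => (1%:M - U *m Madj M U) *m x t).
Proof.
move=> tau_gt0 Lf_gt0; set k := galerkin_constant tau Lf.
exists (Num.sqrt k / (Lf * Num.sqrt tau)); split.
  by rewrite divr_gt0 ?mulr_gt0 ?sqrtr_gt0 ?galerkin_constant_gt0 ?ltW.
move=> N n M K f U x xh M_spd f_lip x_cont x_der U_orth xh0 xh_cont xh_der.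
move=> K_states.
have -> : Lf * (Num.sqrt k / (Lf * Num.sqrt tau)) * Num.sqrt tau = Num.sqrt k.
  by field; rewrite !gt_eqF ?sqrtr_gt0.
have K_traj t : t \in `[0, tau] -> K (x t) /\ K (U *m xh t).
  by move=> /K_states[].
apply: le_trans (galerkin_error_le tau_gt0 Lf_gt0 M_spd f_lip x_cont x_der
  U_orth xh0 xh_cont xh_der K_traj) _.
by rewrite ler_wpM2r ?lerDr ?sqrtr_ge0.
Qed.
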